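(* Consider a chore division instance satisfying Conditions 1 and 2. For every normalized price vector $p\in P$ and every $k\in[d]$, $\sum_{j\in B_k}p_j>0$.
   Context: Instance: agents $[n]$, chores $[m]$, disutility $d$, endowments $w_{i,j}\ge0$ (amount of chore $j$ owned by agent $i$), threshold $\tau$. The disutility graph $D$ is the bipartite graph with edge $\{i,j\}$ iff $d(i,j)<\tau$. Condition 1: $D$ is a disjoint union of complete bipartite graphs $D_1,\dots,D_d$ (its components), $D_k$ with agent set $A_k$ and chore set $B_k$. The exchange graph is the directed graph $W$ on $[d]$ with arc $(k,k')$ iff for every chore $b\in B_{k'}$ there is an agent $a\in A_k$ with $w_{a,b}>0$. Condition 2: $W$ is strongly connected. A normalized price vector is $p\in\mathbb{R}^m$ with $p_j\ge0$, $\sum_{j}p_j=1$, and $\sum_{i\in A_k}\sum_{j\in[m]}w_{i,j}p_j=\sum_{j\in B_k}p_j$ for every $k\in[d]$; $P$ is the set of such vectors. *)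

From HB Require Import structures.
From mathcomp Require Import all_boot all_order all_algebra.
Set Implicit Arguments. Unset Strict Implicit. Unset Printing Implicit Defensive.
Import Order.TTheory GRing.Theory Num.Theory.
Local Open Scope ring_scope.

Definition disutility_graph (R : realFieldType) (n m : nat)
  (dis : 'I_n -> 'I_m -> R) (tau : R) : 'I_n -> 'I_m -> bool :=
  fun i j => dis i j < tau.

(* Condition 1: the bipartite graph D (agents 'I_n, chores 'I_m) is the
   disjoint union of the complete bipartite graphs D_k (k < dd) with agent
   set A k and chore set B k, and these are its connected components:
   - the A k partition the agents, the B k partition the chores;
   - {i,j} is an edge of D iff i \in A k and j \in B k for some k;
   - each D_k is connected: either both sides are nonempty (complete
     bipartite, hence connected) or it is a single isolated vertex. *)
Definition component_decomposition (n m : nat) (D : 'I_n -> 'I_m -> bool)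
  (dd : nat) (A : 'I_dd -> {set 'I_n}) (B : 'I_dd -> {set 'I_m}) : Prop :=
  [/\ (forall i : 'I_n, #|[set k | i \in A k]| = 1%N),
      (forall j : 'I_m, #|[set k | j \in B k]| = 1%N),
      (forall i j, D i j = [exists k, (i \in A k) && (j \in B k)])
    & (forall k, ((A k != set0) && (B k != set0)) || (#|A k| + #|B k| == 1)%N)].

Definition exchange_arc (R : realFieldType) (n m dd : nat)
  (w : 'I_n -> 'I_m -> R) (A : 'I_dd -> {set 'I_n}) (B : 'I_dd -> {set 'I_m})
  : rel 'I_dd :=
  fun k k' => [forall b in B k', exists a in A k, 0 < w a b].

Definition strongly_connected (dd : nat) (e : rel 'I_dd) : Prop :=
  forall k k' : 'I_dd, connect e k k'.

Definition normalized_price (R : realFieldType) (n m dd : nat)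
  (w : 'I_n -> 'I_m -> R) (A : 'I_dd -> {set 'I_n}) (B : 'I_dd -> {set 'I_m})
  (p : 'I_m -> R) : Prop :=
  [/\ (forall j, 0 <= p j),
      \sum_(j < m) p j = 1
    & (forall k, \sum_(i in A k) \sum_(j < m) w i j * p j = \sum_(j in B k) p j)].

From HB Require Import structures.
From mathcomp Require Import all_boot all_order all_algebra.
Set Implicit Arguments. Unset Strict Implicit. Unset Printing Implicit Defensive.
Import Order.TTheory GRing.Theory Num.Theory.
Local Open Scope ring_scope.

(* Write mass k = sum of p_j over the chores j of component k.  At a
   normalized price the agents of A k earn exactly mass k, and all terms
   w_{i,j} p_j of their earnings are nonnegative.  Hence if mass k = 0,
   every chore owned by an agent of A k has price 0; by definition of an
   arc k -> k' of the exchange graph, every chore of B k' is owned by an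
   agent of A k, so mass k' = 0 too.  Zero mass therefore propagates along
   paths, and strong connectivity spreads it to all components.  Since the
   chore sets cover all chores (Condition 1), every price is then 0,
   contradicting the normalization sum p_j = 1.  The propagation argument
   needs only nonnegativity and the balance equations, so it is stated for
   an arbitrary family of chore sets and an arbitrary relation. *)

Section ZeroMassPropagation.

Variables (R : realFieldType) (n m dd : nat).
Variables (w : 'I_n -> 'I_m -> R) (A : 'I_dd -> {set 'I_n}) (B : 'I_dd -> {set 'I_m}).
Variable p : 'I_m -> R.

Hypothesis w_ge0 : forall i j, 0 <= w i j.
Hypothesis p_ge0 : forall j, 0 <= p j.
Hypothesis balance :
  forall k, \sum_(i in A k) \sum_(j < m) w i j * p j = \sum_(j in B k) p j.

Definition mass (k : 'I_dd) : R := \sum_(j in B k) p j.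

Lemma mass_ge0 (k : 'I_dd) : 0 <= mass k.
Proof. exact: sumr_ge0. Qed.

Lemma owned_chore_free {k : 'I_dd} {a : 'I_n} {b : 'I_m} :
  mass k = 0 -> a \in A k -> 0 < w a b -> p b = 0.
Proof.
move=> mass0 aA wab.
have earn_ge0 i j : 0 <= w i j * p j by exact: mulr_ge0.
have earn0 := psumr_eq0P (fun i _ => sumr_ge0 _ (fun j _ => earn_ge0 i j))
                         (etrans (balance k) mass0).
have /eqP := @psumr_eq0P _ _ _ _ (fun j _ => earn_ge0 a j) (earn0 a aA) b isT.
by rewrite mulf_eq0 (gt_eqF wab) => /eqP.
Qed.

Lemma mass0_arc {k k' : 'I_dd} :
  mass k = 0 -> exchange_arc w A B k k' -> mass k' = 0.
Proof.
move=> mass0 /forall_inP owned; apply: big1 => b bB.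
have /exists_inP [a aA wab] := owned b bB.
exact: owned_chore_free mass0 aA wab.
Qed.

Lemma mass0_connect {k k' : 'I_dd} :
  mass k = 0 -> connect (exchange_arc w A B) k k' -> mass k' = 0.
Proof.
move=> mass0 /connectP [s path_s ->] {k'}.
elim: s k mass0 path_s => [|k1 s IHs] k mass0 //= /andP [arc path_s].
exact: IHs (mass0_arc mass0 arc) path_s.
Qed.

Lemma prices0_of_mass0 :
  (forall j, exists k, j \in B k) -> (forall k, mass k = 0) -> forall j, p j = 0.
Proof.
move=> cover mass0 j; have [k jB] := cover j.
exact: (psumr_eq0P (fun j _ => p_ge0 j) (mass0 k)) j jB.
Qed.

End ZeroMassPropagation.

Lemma chore_in_component (n m dd : nat) (D : 'I_n -> 'I_m -> bool)
    (A : 'I_dd -> {set 'I_n}) (B : 'I_dd -> {set 'I_m}) :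
  component_decomposition D A B -> forall j, exists k, j \in B k.
Proof.
move=> [_ cardB _ _] j.
have : (0 < #|[set k | j \in B k]|)%N by rewrite cardB.
by rewrite card_gt0 => /set0Pn [k]; rewrite inE; exists k.
Qed.

Theorem mainTheorem9 (R : realFieldType) (n m : nat)
  (dis : 'I_n -> 'I_m -> R) (w : 'I_n -> 'I_m -> R) (tau : R)
  (dd : nat) (A : 'I_dd -> {set 'I_n}) (B : 'I_dd -> {set 'I_m}) :
  (forall i j, 0 <= w i j) ->
  component_decomposition (disutility_graph dis tau) A B ->
  strongly_connected (exchange_arc w A B) ->
  forall p : 'I_m -> R, normalized_price w A B p ->
  forall k : 'I_dd, 0 < \sum_(j in B k) p j.
Proof.
move=> w_ge0 decomp strong p [p_ge0 p_sum1 balance] k.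
rewrite lt_def (mass_ge0 B p_ge0 k) andbT; apply/eqP => mass0.
have all_mass0 k' : mass B p k' = 0.
  exact: (mass0_connect w_ge0 p_ge0 balance mass0 (strong k k')).
have prices0 := prices0_of_mass0 p_ge0 (chore_in_component decomp) all_mass0.
move: p_sum1; rewrite big1 => [/esym/eqP|j _]; last exact: prices0.
by rewrite oner_eq0.
Qed.
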